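(* Let $m\geq 3$ be an integer. Let $H$ be the graph obtained from $C_m[4]$ by adding, for each vertex $x$ of $C_m$, all six edges among the four vertices $(x,0),(x,1),(x,2),(x,3)$ (so that these four vertices induce a $K_4$). Then there exists a perfect matching $I$ of $C_m[4]$ such that the edge set of $H-I$ can be partitioned into two $C_4$-factors and three $C_m$-factors.
   Context: For a graph $G$ and a positive integer $k$, $G[k]$ is the graph with vertex set $V(G)\times\{0,1,\dots,k-1\}$ in which $(u,i)$ and $(w,j)$ are adjacent if and only if $uw\in E(G)$. $C_m$ is the cycle of length $m$. A perfect matching (1-factor) is a set of pairwise disjoint edges covering all vertices. A $C_k$-factor of a graph is a spanning subgraph each of whose components is a cycle of length $k$. $H-I$ denotes $H$ with the edges of $I$ removed. *)

From mathcomp Require Import all_boot.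
Set Implicit Arguments. Unset Strict Implicit. Unset Printing Implicit Defensive.

Definition V (m : nat) : finType := ('I_m * 'I_4)%type.

Definition cadj (m : nat) (x y : 'I_m) : bool :=
  (nat_of_ord y == (x.+1 %% m)) || (nat_of_ord x == (y.+1 %% m)).

Definition blowE (m : nat) : {set {set V m}} :=
  [set e | [exists x : V m, exists y : V m,
     [&& e == [set x; y], x != y & cadj x.1 y.1]]].

Definition HE (m : nat) : {set {set V m}} :=
  [set e | [exists x : V m, exists y : V m,
     [&& e == [set x; y], x != y & cadj x.1 y.1 || (x.1 == y.1)]]].

Definition perfect_matching (T : finType) (E I : {set {set T}}) : Prop :=
  I \subset E /\ forall v : T, #|[set e in I | v \in e]| = 1.

Definition cycle_edges (T : finType) (c : seq T) : {set {set T}} :=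
  [set [set x; next c x] | x in c].

Definition Ck_factor (T : finType) (k : nat) (E F : {set {set T}}) : Prop :=
  F \subset E /\
  exists cs : seq (seq T),
    [/\ all (fun c => size c == k) cs,
        uniq (flatten cs),
        (forall v : T, v \in flatten cs) &
        F = \bigcup_(c <- cs) cycle_edges c].

From mathcomp Require Import all_boot zify.
Set Implicit Arguments. Unset Strict Implicit. Unset Printing Implicit Defensive.

(* Write the vertices of C_m[4] as (a, i) with a in Z_m and i in Z_4.  The 16
   edges between the fibres over a and a+1 are split into four perfect
   matchings i |-> j forming a 4x4 Latin square: the swap rho = (01)(23) and
   three bijections trans_0, trans_1, trans_2.  The edges (a,1)(a+1,0) and
   (a,3)(a+1,2) of rho form I.  The fibre cycles (a,0)(a,1)(a,2)(a,3) form one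
   C_4-factor; the squares (a,0)(a,2)(a+1,3)(a+1,1), made of the fibre
   diagonals and the remaining rho-edges, form the other.  Following trans_k
   once around C_m closes up after m steps, giving a C_m-factor, provided the
   composite of the m bijections trans_k used along the way is the identity:
   for even m all of them are involutions, for odd m the last three steps use
   three bijections whose composite is the identity.  Labelling every pair of
   vertices by the factor (or I) containing it shows that the five factors
   partition H - I. *)

Lemma in_bigcup_seq (T : finType) (S : eqType) (X : S -> {set T}) (cs : seq S) e :
  (e \in \bigcup_(c <- cs) X c) = has (fun c => e \in X c) cs.
Proof.
elim: cs => [|c cs IH]; first by rewrite big_nil inE.
by rewrite big_cons inE IH.
Qed.

Lemma set2_eq (T : finType) (a b c d : T) :
  [set a; b] = [set c; d] -> (a = c /\ b = d) \/ (a = d /\ b = c).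
Proof.
move=> E.
have ha : a \in [set c; d] by rewrite -E set21.
have hb : b \in [set c; d] by rewrite -E set22.
have hc : c \in [set a; b] by rewrite E set21.
have hd : d \in [set a; b] by rewrite E set22.
case/set2P: ha => ?; case/set2P: hb => ?; subst; auto.
- by case/set2P: hd => ?; subst; auto.
- by case/set2P: hc => ?; subst; auto.
Qed.

Lemma fcycle_traject (T : eqType) (s : T -> T) x k :
  0 < k -> iter k s x = x -> fcycle s (traject s x k).
Proof.
case: k => // k _ hk; rewrite trajectS /=.
have -> : rcons (traject s (s x) k) x = traject s (s x) k.+1.
  by rewrite trajectSr -iterSr hk.
exact: fpath_traject.
Qed.

Lemma size_flatten_traject (T : eqType) (s : T -> T) (rs : seq T) k :
  size (flatten [seq traject s x k | x <- rs]) = size rs * k.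
Proof. by elim: rs => //= x rs IH; rewrite size_cat size_traject IH mulSn. Qed.

(* The orbits of the points of rs need not be shown disjoint: covering T with
   size rs * k = #|T| points forces it. *)
Lemma Ck_factor_orbits (T : finType) (k : nat) (E : {set {set T}}) (s : T -> T)
    (rs : seq T) :
  0 < k -> (forall x, x \in rs -> iter k s x = x) -> size rs * k = #|T| ->
  (forall v, exists2 x, x \in rs & exists2 t, t < k & v = iter t s x) ->
  (forall v, [set v; s v] \in E) ->
  Ck_factor k E [set [set v; s v] | v : T].
Proof.
move=> k_gt0 hk hsz hcov hE; split.
  by apply/subsetP => e /imsetP [v _ ->]; exact: hE.
exists [seq traject s x k | x <- rs].
have cov v : v \in flatten [seq traject s x k | x <- rs].
  have [x xr [t tk ->]] := hcov v; apply/flatten_mapP; exists x => //.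
  by apply/trajectP; exists t.
have next_orbit x v : x \in rs -> v \in traject s x k -> next (traject s x k) v = s v.
  by move=> xr; apply/nextE/fcycle_traject/hk.
split=> //.
- by apply/allP => c /mapP [x _ ->]; rewrite size_traject.
- rewrite (uniq_size_uniq (enum_uniq T)); last by move=> v; rewrite mem_enum cov.
  by rewrite size_flatten_traject hsz cardE.
apply/setP => e; rewrite in_bigcup_seq; apply/imsetP/hasP.
  case=> v _ ->; have /flatten_mapP [x xr vx] := cov v.
  exists (traject s x k); first by apply/mapP; exists x.
  by apply/imsetP; exists v; rewrite ?next_orbit.
case=> c /mapP [x xr ->] /imsetP [v vx ->]; exists v => //.
by rewrite next_orbit.
Qed.

Definition i0 : 'I_4 := @Ordinal 4 0 isT.
Definition i1 : 'I_4 := @Ordinal 4 1 isT.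
Definition i2 : 'I_4 := @Ordinal 4 2 isT.
Definition i3 : 'I_4 := @Ordinal 4 3 isT.

Lemma ord4P (i : 'I_4) : [\/ i = i0, i = i1, i = i2 | i = i3].
Proof. by case: i => [[|[|[|[|k]]]] H]; try (by constructor; apply/val_inj). Qed.

Definition fun4 (a b c d : 'I_4) (i : 'I_4) : 'I_4 :=
  match val i with 0 => a | 1 => b | 2 => c | _ => d end.

Definition rho : 'I_4 -> 'I_4 := fun4 i1 i0 i3 i2.

Definition latin (c k : nat) : 'I_4 -> 'I_4 :=
  match c, k with
  | 0, 0 => fun4 i0 i1 i2 i3
  | 0, 1 => fun4 i2 i3 i0 i1
  | 0, _ => fun4 i3 i2 i1 i0
  | 1, 0 => fun4 i0 i1 i2 i3
  | 1, 1 => fun4 i2 i3 i1 i0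
  | 1, _ => fun4 i3 i2 i0 i1
  | 2, 0 => fun4 i2 i3 i1 i0
  | 2, 1 => fun4 i3 i2 i0 i1
  | 2, _ => fun4 i0 i1 i2 i3
  | _, 0 => fun4 i3 i2 i0 i1
  | _, 1 => fun4 i0 i1 i2 i3
  | _, _ => fun4 i2 i3 i1 i0
  end.

Lemma latin_neq c k l i : k < 3 -> l < 3 -> k != l -> latin c k i != latin c l i.
Proof.
case: k => [|[|[|]]] //; case: l => [|[|[|]]] // _ _ _;
case: (ord4P i) => ->; by case: c => [|[|[|c]]].
Qed.

Lemma latin_neq_rho c k i : latin c k i != rho i.
Proof. by case: (ord4P i) => ->; case: c => [|[|[|c]]]; case: k => [|[|k]]. Qed.

Lemma latin_cover c i j :
  [|| j == rho i, j == latin c 0 i, j == latin c 1 i | j == latin c 2 i].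
Proof. by case: (ord4P i) => ->; case: (ord4P j) => ->; case: c => [|[|[|c]]]. Qed.

Lemma latin_inj c k : injective (latin c k).
Proof.
move=> i j; case: (ord4P i) => ->; case: (ord4P j) => ->;
  by case: c => [|[|[|c]]]; case: k => [|[|k]].
Qed.

Lemma latin0K k : involutive (latin 0 k).
Proof. by move=> i; case: (ord4P i) => ->; case: k => [|[|k]]. Qed.

Lemma latin123K k i : latin 3 k (latin 2 k (latin 1 k i)) = i.
Proof. by case: (ord4P i) => ->; case: k => [|[|k]]. Qed.

Section CyclicOrdinal.

Variable n : nat.
Implicit Types a b : 'I_n.+3.

Lemma val_ordS a : val (ordS a) = if a.+1 == n.+3 then 0 else a.+1.
Proof.
rewrite /ordS /=; case: eqP => [->|h]; first by rewrite modnn.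
by rewrite modn_small //; have := ltn_ord a; lia.
Qed.

Lemma ordS_eqF a : (ordS a == a) = false.
Proof.
apply/negP => /eqP/(congr1 val); rewrite val_ordS.
by case: (boolP (a.+1 == n.+3)) => /eqP h /=; lia.
Qed.

Lemma ordSS_eqF a : (ordS (ordS a) == a) = false.
Proof.
apply/negbTE/eqP => /(congr1 val); rewrite val_ordS (val_ordS a).
have := ltn_ord a; case: (boolP (a.+1 == n.+3)) => /eqP h1 /=; last first.
  by case: (boolP (a.+2 == n.+3)) => /eqP h2 /=; lia.
by case: (boolP (1 == n.+3)) => /eqP h2 /=; lia.
Qed.

Lemma eq_ordSF a : (a == ordS a) = false.
Proof. by rewrite eq_sym ordS_eqF. Qed.

Lemma ord_pred_eqF a : (ord_pred a == a) = false.
Proof. by apply/negP => /eqP h; move: (ordS_eqF (ord_pred a)); rewrite ord_predK h eqxx. Qed.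

Lemma eq_ord_predF a : (a == ord_pred a) = false.
Proof. by rewrite eq_sym ord_pred_eqF. Qed.

Lemma ord_pred_ordS_eqF a : (ord_pred a == ordS a) = false.
Proof. by apply/negP => /eqP h; move: (ordSS_eqF (ord_pred a)); rewrite ord_predK -h eqxx. Qed.

Lemma ordS_ord_pred_eqF a : (ordS a == ord_pred a) = false.
Proof. by rewrite eq_sym ord_pred_ordS_eqF. Qed.

Lemma cadjE a b : cadj a b = (b == ordS a) || (a == ordS b).
Proof. by rewrite /cadj -[b == ordS a]val_eqE -[a == ordS b]val_eqE. Qed.

End CyclicOrdinal.

Section Construction.

Variable n : nat.
Local Notation m := n.+3.
Local Notation vertex := (V m).
Implicit Types (a b : 'I_m) (u v w : vertex).

(* For odd m the steps t = n, n+1, n+2 use the types 1, 2, 3 of [latin]; every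
   other step uses the involutions of type 0. *)
Definition step_type (t : nat) : nat := if odd m && (n <= t) then t - n + 1 else 0.

Definition trans k a : 'I_4 -> 'I_4 := latin (step_type a) k.

Definition fibre_step u : vertex := (u.1, ordS u.2).

Definition square_step u : vertex :=
  match val u.2 with
  | 0 => (u.1, i2) | 1 => (ord_pred u.1, i0) | 2 => (ordS u.1, i3) | _ => (u.1, i1)
  end.

Definition column_step k u : vertex := (ordS u.1, trans k u.1 u.2).

Definition mate u : vertex :=
  match val u.2 with
  | 0 => (ord_pred u.1, i1) | 1 => (ordS u.1, i0) | 2 => (ord_pred u.1, i3) | _ => (ordS u.1, i2)
  end.

Definition factor_step (j : nat) : vertex -> vertex :=
  match j with
  | 1 => fibre_step | 2 => square_step | 3 => column_step 0 | 4 => column_step 1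
  | _ => column_step 2
  end.

Definition cross_label a (i j : 'I_4) : nat :=
  if j == rho i then (if odd i then 0 else 2)
  else if j == trans 0 a i then 3 else if j == trans 1 a i then 4 else 5.

(* The label of a pair is 0 on the matching I, j in 1..5 on the edges of the
   j-th factor, and 7 on pairs that are not edges of H. *)
Definition edge_label u v : nat :=
  if u.1 == v.1 then
    (if u.2 == v.2 then 7 else if (v.2 == ordS u.2) || (u.2 == ordS v.2) then 1 else 2)
  else if v.1 == ordS u.1 then cross_label u.1 u.2 v.2
  else if u.1 == ordS v.1 then cross_label v.1 v.2 u.2 else 7.

Lemma edge_labelC u v : edge_label u v = edge_label v u.
Proof.
case: u v => [a i] [b j]; rewrite /edge_label /=.
case: (eqVneq a b) => [eab|ab]; first subst b; first by rewrite eq_sym orbC.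
case: (eqVneq b (ordS a)) => [->|//].
by rewrite eq_sym ordSS_eqF.
Qed.

Lemma edge_label_set2 u v u' v' :
  [set u; v] = [set u'; v'] -> edge_label u v = edge_label u' v'.
Proof. by case/set2_eq => [[-> ->]|[-> ->]] //; rewrite edge_labelC. Qed.

Lemma cross_label_le a i j : cross_label a i j <= 5.
Proof. by rewrite /cross_label; do !case: ifP. Qed.

Lemma cross_label_trans a k i : k < 3 -> cross_label a i (trans k a i) = k + 3.
Proof.
move=> hk; rewrite /cross_label /trans (negbTE (latin_neq_rho _ _ _)).
case: k hk => [|[|[|]]] // _; rewrite ?eqxx //.
- by rewrite (negbTE (@latin_neq _ 1 0 _ isT isT isT)).
- by rewrite (negbTE (@latin_neq _ 2 0 _ isT isT isT))
             (negbTE (@latin_neq _ 2 1 _ isT isT isT)).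
Qed.

Lemma trans2_eq a i j :
  j != rho i -> j != trans 0 a i -> j != trans 1 a i -> j = trans 2 a i.
Proof.
move=> h1 h2 h3; have := latin_cover (step_type a) i j.
by rewrite /trans (negbTE h1) (negbTE h2) (negbTE h3) /= => /eqP.
Qed.

Ltac simpl_ord := rewrite /= ?eqxx ?ordS_eqF ?eq_ordSF ?ord_pred_eqF ?eq_ord_predF
  ?ord_pred_ordS_eqF ?ordS_ord_pred_eqF ?ord_predK ?ordSK ?eqxx /=.

Ltac pair_eq := apply/eqP; rewrite ?xpair_eqE; simpl_ord.

Lemma edge_label_step j u : 1 <= j <= 5 -> edge_label u (factor_step j u) = j.
Proof.
case: u => a i; case: j => [|[|[|[|[|[|j]]]]]] // _.
- by case: (ord4P i) => ->; rewrite /edge_label /fibre_step; simpl_ord.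
- by case: (ord4P i) => ->; rewrite /edge_label /square_step; simpl_ord.
all: by rewrite /edge_label /column_step; simpl_ord; rewrite cross_label_trans.
Qed.

Lemma edge_label_mate u : edge_label u (mate u) = 0.
Proof. by case: u => a i; case: (ord4P i) => ->; rewrite /edge_label /mate; simpl_ord. Qed.

Lemma edge_label0 u v : edge_label u v = 0 -> v = mate u.
Proof.
case: u v => a i [b j]; rewrite /edge_label /=.
case: (eqVneq a b) => [eab|ab]; first subst b; first by case: ifP => //; case: ifP.
case: (eqVneq b (ordS a)) => [->|_].
  rewrite /cross_label; case: (eqVneq j (rho i)) => [->|]; last by do !case: ifP.
  by case: (ord4P i) => -> //= _; pair_eq.
case: (eqVneq a (ordS b)) => [->|//].
rewrite /cross_label; case: (eqVneq i (rho j)) => [->|]; last by do !case: ifP.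
by case: (ord4P j) => -> //= _; pair_eq.
Qed.

Lemma mateK : involutive mate.
Proof. by move=> u; apply/esym/edge_label0; rewrite edge_labelC edge_label_mate. Qed.

Ltac step_from_either :=
  first [ by left; rewrite /factor_step /fibre_step /square_step; pair_eq
        | by right; rewrite /factor_step /fibre_step /square_step; pair_eq ].

Lemma edge_label_stepP u v : 1 <= edge_label u v <= 5 ->
  v = factor_step (edge_label u v) u \/ u = factor_step (edge_label u v) v.
Proof.
case: u v => a i [b j]; rewrite /edge_label /=.
case: (eqVneq a b) => [eab|ab]; first subst b.
  by case: (ord4P i) => ->; case: (ord4P j) => -> /= H; try discriminate; step_from_either.
case: (eqVneq b (ordS a)) => [->|_].
  rewrite /cross_label; case: (eqVneq j (rho i)) => [->|n1].
    by case: (ord4P i) => -> /= H; try discriminate; step_from_either.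
  case: (eqVneq j (trans 0 a i)) => [->|n2] _; first by left.
  case: (eqVneq j (trans 1 a i)) => [->|n3]; first by left.
  by left; rewrite (trans2_eq n1 n2 n3).
case: (eqVneq a (ordS b)) => [->|//].
rewrite /cross_label; case: (eqVneq i (rho j)) => [->|n1].
  by case: (ord4P j) => -> /= H; try discriminate; step_from_either.
case: (eqVneq i (trans 0 b j)) => [->|n2] _; first by right.
case: (eqVneq i (trans 1 b j)) => [->|n3]; first by right.
by right; rewrite (trans2_eq n1 n2 n3).
Qed.

Lemma edge_label_HE u v : edge_label u v <= 5 -> [set u; v] \in HE m.
Proof.
move=> H; rewrite inE; apply/existsP; exists u; apply/existsP; exists v; rewrite eqxx /=.
move: H; case: u v => a i [b j]; rewrite /edge_label /= xpair_eqE.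
case: (eqVneq a b) => [eab|ab] /=; first subst b; first by rewrite orbT andbT; case: (eqVneq i j).
rewrite cadjE; case: (eqVneq b (ordS a)) => //=; by case: (eqVneq a (ordS b)).
Qed.

Lemma edge_label0_blowE u v : edge_label u v = 0 -> [set u; v] \in blowE m.
Proof.
move=> H; rewrite inE; apply/existsP; exists u; apply/existsP; exists v; rewrite eqxx /=.
move: H; case: u v => a i [b j]; rewrite /edge_label /= xpair_eqE.
case: (eqVneq a b) => [eab|ab] /=; first subst b; first by case: ifP => //; case: ifP.
rewrite cadjE; case: (eqVneq b (ordS a)) => //=; by case: (eqVneq a (ordS b)).
Qed.

Lemma HE_edge_label e : e \in HE m -> exists u v, e = [set u; v] /\ edge_label u v <= 5.
Proof.
rewrite inE => /existsP [u /existsP [v /and3P [/eqP -> uv adj]]].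
exists u, v; split => //; move: uv adj; case: u v => a i [b j].
rewrite /edge_label /= xpair_eqE.
case: (eqVneq a b) => [eab|ab] /=; first subst b.
  by case: (eqVneq i j) => //= _ _ _; case: ifP.
rewrite orbF cadjE; case: (eqVneq b (ordS a)) => /= _ _; first by rewrite cross_label_le.
by case: (eqVneq a (ordS b)) => //= _; rewrite cross_label_le.
Qed.

Definition matchingI := [set [set v; mate v] | v : vertex].
Definition factorF j := [set [set v; factor_step j v] | v : vertex].

Lemma matchingI_perfect : perfect_matching (blowE m) matchingI.
Proof.
split.
  by apply/subsetP => e /imsetP [v _ ->]; apply/edge_label0_blowE/edge_label_mate.
move=> w; suff -> : [set e in matchingI | w \in e] = [set [set w; mate w]] by rewrite cards1.
apply/setP => e; rewrite !inE; apply/andP/eqP.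
  case=> /imsetP [v _ ->] /set2P [->|->] //.
  by rewrite mateK setUC.
by move=> ->; split; [apply/imsetP; exists w | rewrite set21].
Qed.

Lemma factorF_sub j v : 1 <= j <= 5 -> [set v; factor_step j v] \in HE m :\: matchingI.
Proof.
move=> hj; rewrite inE; apply/andP; split.
  apply/negP => /imsetP [w _ /edge_label_set2].
  by rewrite edge_label_step // edge_label_mate => h; move: hj; rewrite h.
by apply: edge_label_HE; rewrite edge_label_step //; case/andP: hj.
Qed.

Lemma factorF_disjoint j l :
  1 <= j <= 5 -> 1 <= l <= 5 -> j != l -> [disjoint factorF j & factorF l].
Proof.
move=> hj hl jl; rewrite -setI_eq0; apply/eqP/setP => e; rewrite !inE.
apply/negbTE/negP => /andP [/imsetP [v _ ->] /imsetP [w _ /edge_label_set2]].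
by rewrite !edge_label_step // => h; move: jl; rewrite h eqxx.
Qed.

Lemma factorF_partition :
  factorF 1 :|: factorF 2 :|: factorF 3 :|: factorF 4 :|: factorF 5 = HE m :\: matchingI.
Proof.
apply/setP => e; apply/idP/idP.
  by rewrite !in_setU => /orP [/orP [/orP [/orP [h|h]|h]|h]|h];
    case/imsetP: h => v _ ->; apply: factorF_sub.
rewrite in_setD => /andP [notI /HE_edge_label [u [v [eE le5]]]]; subst e.
have in_factorF l f : 1 <= l <= 5 -> f \in factorF l ->
    f \in factorF 1 :|: factorF 2 :|: factorF 3 :|: factorF 4 :|: factorF 5.
  by case: l => [|[|[|[|[|[|l]]]]]] // _ h; rewrite !in_setU h ?orbT.
case: (posnP (edge_label u v)) => [lab0|lab_gt0].
  by move: notI; rewrite (edge_label0 lab0) => /negP; case; apply/imsetP; exists u.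
have hl : 1 <= edge_label u v <= 5 by rewrite lab_gt0 le5.
move: hl (edge_label_stepP hl); move: (edge_label u v) => l hl [->|->];
  apply: (in_factorF _ _ hl); apply/imsetP; first by exists u.
by exists v => //; rewrite setUC.
Qed.

Lemma card_vertex : #|vertex| = m * 4.
Proof. by rewrite /V card_prod !card_ord. Qed.

Lemma fibre_factor : Ck_factor 4 (HE m :\: matchingI) (factorF 1).
Proof.
apply: (@Ck_factor_orbits _ 4 _ fibre_step [seq (a, i0) | a <- enum 'I_m]) => //.
- by move=> x /mapP [a _ ->]; pair_eq.
- by rewrite size_map size_enum_ord card_vertex.
- case=> a i; exists (a, i0); first by apply/mapP; exists a; rewrite ?mem_enum.
  by exists (val i); [exact: ltn_ord | case: (ord4P i) => ->; pair_eq].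
- by move=> v; apply: (@factorF_sub 1).
Qed.

Lemma square_factor : Ck_factor 4 (HE m :\: matchingI) (factorF 2).
Proof.
apply: (@Ck_factor_orbits _ 4 _ square_step [seq (a, i0) | a <- enum 'I_m]) => //.
- by move=> x /mapP [a _ ->]; rewrite /= /square_step /= ordSK.
- by rewrite size_map size_enum_ord card_vertex.
- have root a : (a, i0) \in [seq (b, i0) | b <- enum 'I_m].
    by apply/mapP; exists a; rewrite ?mem_enum.
  case=> b i; case: (ord4P i) => ->.
  + by exists (b, i0) => //; exists 0.
  + by exists (ord_pred b, i0) => //; exists 3 => //; rewrite /= /square_step /= ord_predK.
  + by exists (b, i0) => //; exists 1.
  + by exists (ord_pred b, i0) => //; exists 2 => //; rewrite /= /square_step /= ord_predK.
- by move=> v; apply: (@factorF_sub 2).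
Qed.

Fixpoint column_walk k (j : 'I_4) t : 'I_4 :=
  if t is t'.+1 then latin (step_type t') k (column_walk k j t') else j.

Lemma iter_column_step k j t : t < m ->
  iter t (column_step k) (ord0, j) = (inord t, column_walk k j t).
Proof.
elim: t => [|t IH] ht; first by congr pair; apply/val_inj; rewrite /= inordK.
rewrite iterS IH ?(ltnW ht) //; congr pair.
  by apply/val_inj; rewrite val_ordS /= (inordK (ltnW ht)) (inordK ht) (ltn_eqF ht).
by rewrite /= /trans inordK //; lia.
Qed.

Lemma step_type0 t : ~~ odd m || (t < n) -> step_type t = 0.
Proof. by rewrite /step_type; case: (odd m) => //= h; rewrite leqNgt h. Qed.

Lemma column_walk_double k j r :
  2 * r <= m -> (odd m -> 2 * r <= n) -> column_walk k j (2 * r) = j.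
Proof.
elim: r => [|r IH] h1 h2 //.
have -> : 2 * r.+1 = (2 * r).+2 by lia.
rewrite /= IH; [|lia|by move=> o; have := h2 o; lia].
rewrite !step_type0 ?latin0K //; case: (odd m) h2 => //= h2; have := h2 isT; lia.
Qed.

Lemma column_walk_full k j : column_walk k j m = j.
Proof.
case: (boolP (odd m)) => o; last first.
  have ev : m = 2 * m./2 by rewrite -{1}(odd_double_half m) (negbTE o) add0n mul2n.
  by rewrite ev column_walk_double -?ev // (negbTE o).
have ev : n = 2 * n./2.
  by move: o; rewrite /= negbK => o; rewrite -{1}(odd_double_half n) (negbTE o) add0n mul2n.
rewrite /= /step_type o /= leqnn (leqnSn n) (leqW (leqnSn n)).
have -> : n.+2 - n + 1 = 3 by lia.
have -> : n.+1 - n + 1 = 2 by lia.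
have -> : n - n + 1 = 1 by lia.
by rewrite ev column_walk_double -?ev ?latin123K //; lia.
Qed.

Lemma column_walk_inj k t : injective (fun j => column_walk k j t).
Proof. by elim: t => [|t IH] i j //= /latin_inj; exact: IH. Qed.

Lemma column_factor k : k < 3 -> Ck_factor m (HE m :\: matchingI) (factorF k.+3).
Proof.
move=> hk.
have -> : factorF k.+3 = [set [set v; column_step k v] | v : vertex].
  by rewrite /factorF; case: k hk => [|[|[|]]].
apply: (@Ck_factor_orbits _ m _ (column_step k) [seq (ord0, j) | j <- enum 'I_4]) => //.
- move=> x /mapP [j _ ->].
  rewrite -[m]/(n.+2.+1) iterS iter_column_step //.
  rewrite /column_step /trans /= inordK // -/(column_walk k j m) column_walk_full.
  by congr pair; apply/val_inj; rewrite val_ordS /= inordK // eqxx.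
- by rewrite size_map size_enum_ord mulnC card_vertex.
- case=> a i; have [g gK Kg] := injF_bij (@column_walk_inj k a).
  exists (ord0, g i); first by apply/mapP; exists (g i); rewrite ?mem_enum.
  exists (val a); first exact: ltn_ord.
  by rewrite iter_column_step ?ltn_ord // inord_val Kg.
- move=> v; have := @factorF_sub k.+3 v.
  by case: k hk => [|[|[|]]] // _; apply.
Qed.

End Construction.

Theorem mainTheorem6 (m : nat) (hm : 3 <= m) :
  exists I : {set {set V m}},
    perfect_matching (blowE m) I /\
    exists F1 F2 F3 F4 F5 : {set {set V m}},
      [/\ Ck_factor 4 (HE m :\: I) F1,
          Ck_factor 4 (HE m :\: I) F2,
          Ck_factor m (HE m :\: I) F3,
          Ck_factor m (HE m :\: I) F4 &
          Ck_factor m (HE m :\: I) F5] /\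
      F1 :|: F2 :|: F3 :|: F4 :|: F5 = HE m :\: I /\
      [disjoint F1 & F2] /\ [disjoint F1 & F3] /\ [disjoint F1 & F4] /\
      [disjoint F1 & F5] /\ [disjoint F2 & F3] /\ [disjoint F2 & F4] /\
      [disjoint F2 & F5] /\ [disjoint F3 & F4] /\ [disjoint F3 & F5] /\
      [disjoint F4 & F5].
Proof.
case: m hm => [|[|[|n]]] // _.
exists (matchingI n); split; first exact: matchingI_perfect.
exists (factorF n 1), (factorF n 2), (factorF n 3), (factorF n 4), (factorF n 5).
split; first split.
- exact: fibre_factor.
- exact: square_factor.
- exact: (@column_factor n 0).
- exact: (@column_factor n 1).
- exact: (@column_factor n 2).
split; first exact: factorF_partition.
by do !split; apply: factorF_disjoint.
Qed.
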